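(* For any c.e. transitive relation $\prec$ on $\omega$ there exists a computable partial order $\sqsubseteq$ on $\omega$ such that $\mathcal{I}(\prec)$ is computably homeomorphic to the subspace of non-principal ideals of $\mathcal{I}(\sqsubseteq)$.
   Context: For a transitive relation $\prec$ on a set $S$, an ideal is a set $I\subseteq S$ that is non-empty, a lower set ($b\prec a\in I$ implies $b\in I$), and directed (for all $a,b\in I$ there is $c\in I$ with $a\prec c$ and $b\prec c$). $\mathcal{I}(\prec)$ is the set of all ideals with the topology generated by the basic open sets $[n]_\prec=\{I\mid n\in I\}$, regarded as an effective space with these basic sets numbered by $n$; subspaces carry the induced numbering $n\mapsto[n]_\prec\cap Y$. An ideal of a partial order $\sqsubseteq$ is principal if it has a $\sqsubseteq$-largest element. A computable homeomorphism between effective spaces $(X,\beta),(Y,\gamma)$ is a homeomorphism $f$ such that both $f$ and $f^{-1}$ are computable, where $f$ is computable if $f^{-1}(\gamma(n))=\bigcup\beta(B_n)$ for a uniformly c.e. family $(B_n)$. *)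

From Stdlib Require Import List Arith.
Import ListNotations.

Inductive mrec : Type :=
| MZero : mrec
| MSucc : mrec
| MProj : nat -> mrec
| MComp : mrec -> list mrec -> mrec
| MPrec : mrec -> mrec -> mrec
| MMu   : mrec -> mrec.

Inductive eval : mrec -> list nat -> nat -> Prop :=
| ev_zero : forall xs, eval MZero xs 0
| ev_succ : forall xs, eval MSucc xs (S (nth 0 xs 0))
| ev_proj : forall i xs, eval (MProj i) xs (nth i xs 0)
| ev_comp : forall f gs xs ys z,
    evals gs xs ys -> eval f ys z -> eval (MComp f gs) xs z
| ev_prec0 : forall f g xs z, eval f xs z -> eval (MPrec f g) (0 :: xs) z
| ev_precS : forall f g n xs y z,
    eval (MPrec f g) (n :: xs) y -> eval g (n :: y :: xs) z ->
    eval (MPrec f g) (S n :: xs) z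
| ev_mu : forall f xs n,
    eval f (n :: xs) 0 ->
    (forall m, m < n -> exists k, eval f (m :: xs) (S k)) ->
    eval (MMu f) xs n
with evals : list mrec -> list nat -> list nat -> Prop :=
| evs_nil : forall xs, evals [] xs []
| evs_cons : forall g gs xs y ys,
    eval g xs y -> evals gs xs ys -> evals (g :: gs) xs (y :: ys).

Definition ce_rel (R : nat -> nat -> Prop) : Prop :=
  exists p : mrec, forall a b, R a b <-> exists y, eval p [a; b] y.

Definition computable_rel (R : nat -> nat -> Prop) : Prop :=
  exists p : mrec, forall a b,
    (R a b -> eval p [a; b] 1) /\ (~ R a b -> eval p [a; b] 0).

Definition transitive_rel (R : nat -> nat -> Prop) : Prop :=
  forall a b c, R a b -> R b c -> R a c.

Definition partial_order (R : nat -> nat -> Prop) : Prop :=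
  (forall a, R a a) /\
  (forall a b, R a b -> R b a -> a = b) /\
  transitive_rel R.

Definition is_ideal (R : nat -> nat -> Prop) (I : nat -> Prop) : Prop :=
  (exists a, I a) /\
  (forall a b, R b a -> I a -> I b) /\
  (forall a b, I a -> I b -> exists c, I c /\ R a c /\ R b c).

Definition principal (R : nat -> nat -> Prop) (I : nat -> Prop) : Prop :=
  exists a, I a /\ forall b, I b -> R b a.

Definition Ideals (R : nat -> nat -> Prop) : Type :=
  { I : nat -> Prop | is_ideal R I }.

Definition NPIdeals (R : nat -> nat -> Prop) : Type :=
  { I : nat -> Prop | is_ideal R I /\ ~ principal R I }.

(** Numberings of basic open sets: n |-> [n]_R (restricted to the subspace). *)
Definition ideal_basis (R : nat -> nat -> Prop) (n : nat) (I : Ideals R) : Prop :=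
  proj1_sig I n.

Definition npideal_basis (R : nat -> nat -> Prop) (n : nat) (I : NPIdeals R) : Prop :=
  proj1_sig I n.

Definition gen_open {X : Type} (beta : nat -> X -> Prop) (U : X -> Prop) : Prop :=
  forall x, U x -> exists ns : list nat,
    (forall n, In n ns -> beta n x) /\
    (forall y, (forall n, In n ns -> beta n y) -> U y).

Definition continuous_map {X Y : Type} (beta : nat -> X -> Prop)
  (gamma : nat -> Y -> Prop) (f : X -> Y) : Prop :=
  forall V, gen_open gamma V -> gen_open beta (fun x => V (f x)).

(** f is computable: f^{-1}(gamma n) = U_{m in B_n} beta m for a uniformly
    c.e. family (B_n) (encoded as the c.e. relation B n m :<-> m in B_n). *)
Definition computable_map {X Y : Type} (beta : nat -> X -> Prop)
  (gamma : nat -> Y -> Prop) (f : X -> Y) : Prop :=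
  exists B : nat -> nat -> Prop, ce_rel B /\
    forall n x, gamma n (f x) <-> exists m, B n m /\ beta m x.

Definition computably_homeomorphic {X Y : Type} (beta : nat -> X -> Prop)
  (gamma : nat -> Y -> Prop) : Prop :=
  exists (f : X -> Y) (g : Y -> X),
    (forall x, g (f x) = x) /\ (forall y, f (g y) = y) /\
    continuous_map beta gamma f /\ continuous_map gamma beta g /\
    computable_map beta gamma f /\ computable_map gamma beta g.

(* Enumerate the c.e. relation by stages: a ≺_u c when its enumerating code halts on (a, c)
   within u steps, so each stage is decidable and ≺ is their increasing union. Give every
   number m a label such that each value is the label of infinitely many numbers, and put
   m ⊏ n when m < n, the stage ≺_n is transitive on [0, max(m, label n)], and
   label m ≺_n label n; this is a decidable strict order, and ⊑ is its reflexive closure.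
   An ideal I of ≺ goes to the set of all m lying ⊏-below some n whose label is in I; since
   labels recur and every instance of ≺ shows up at all late enough stages, this is an ideal
   without a largest element. Conversely, a non-principal ideal of ⊑ goes to the set of labels
   of its elements. The two maps are mutually inverse, and each pulls a basic open set back to
   a c.e. union of basic open sets. *)

From Stdlib Require Import List Arith Lia Bool Classical.
From Stdlib Require Import FunctionalExtensionality PropExtensionality ProofIrrelevance.
Import ListNotations.

Definition mrec_ind_nested (P : mrec -> Prop) (H0 : P MZero) (H1 : P MSucc)
  (H2 : forall i, P (MProj i))
  (H3 : forall f gs, P f -> Forall P gs -> P (MComp f gs))
  (H4 : forall f g, P f -> P g -> P (MPrec f g))
  (H5 : forall f, P f -> P (MMu f)) : forall f, P f :=
  fix F f := match f return P f with
  | MZero => H0 | MSucc => H1 | MProj i => H2 i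
  | MComp f gs => H3 f gs (F f)
      ((fix G gs := match gs return Forall P gs with
        | [] => Forall_nil _ | g :: gs' => Forall_cons _ (F g) (G gs') end) gs)
  | MPrec f g => H4 f g (F f) (F g)
  | MMu f => H5 f (F f) end.

Lemma eval_comp_inv h gs xs y :
  eval (MComp h gs) xs y -> exists ys, evals gs xs ys /\ eval h ys y.
Proof. intros H; inversion H; subst; eauto. Qed.

Lemma eval_prec_inv f g x xs z : eval (MPrec f g) (x :: xs) z ->
  match x with
  | 0 => eval f xs z
  | S n => exists y, eval (MPrec f g) (n :: xs) y /\ eval g (n :: y :: xs) z
  end.
Proof. intros H; inversion H; subst; eauto. Qed.

Lemma eval_prec_nil f g z : ~ eval (MPrec f g) [] z.
Proof. intros H; inversion H. Qed.

Lemma eval_mu_inv f xs n : eval (MMu f) xs n ->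
  eval f (n :: xs) 0 /\ (forall m, m < n -> exists k, eval f (m :: xs) (S k)).
Proof. intros H; inversion H; subst; auto. Qed.

Lemma evals_inv g gs xs ys : evals (g :: gs) xs ys ->
  exists y ys', ys = y :: ys' /\ eval g xs y /\ evals gs xs ys'.
Proof. intros H; inversion H; subst; eauto. Qed.

Lemma evals_nil_inv xs ys : evals [] xs ys -> ys = [].
Proof. intros H; inversion H; auto. Qed.

Lemma eval_functional f : forall xs y1 y2, eval f xs y1 -> eval f xs y2 -> y1 = y2.
Proof.
  induction f as [| |i|h gs IHh IHgs|f1 f2 IH1 IH2|f1 IH1] using mrec_ind_nested;
    intros xs y1 y2 E1 E2; try (inversion E1; inversion E2; subst; reflexivity).
  - destruct (eval_comp_inv _ _ _ _ E1) as [ys1 [A1 B1]].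
    destruct (eval_comp_inv _ _ _ _ E2) as [ys2 [A2 B2]].
    enough (ys1 = ys2) by (subst; eauto).
    clear B1 B2 E1 E2. revert ys1 ys2 A1 A2.
    induction IHgs as [|g gs Hg _ IH]; intros ys1 ys2 A1 A2.
    + now rewrite (evals_nil_inv _ _ A1), (evals_nil_inv _ _ A2).
    + destruct (evals_inv _ _ _ _ A1) as [a1 [l1 [-> [C1 D1]]]].
      destruct (evals_inv _ _ _ _ A2) as [a2 [l2 [-> [C2 D2]]]].
      f_equal; eauto.
  - destruct xs as [|x xs]; [now apply eval_prec_nil in E1|].
    revert y1 y2 E1 E2. induction x; intros y1 y2 E1 E2;
      apply eval_prec_inv in E1; apply eval_prec_inv in E2; eauto.
    destruct E1 as [a1 [A1 B1]], E2 as [a2 [A2 B2]].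
    assert (a1 = a2) by eauto. subst. eauto.
  - apply eval_mu_inv in E1 as [A1 B1]. apply eval_mu_inv in E2 as [A2 B2].
    destruct (Nat.lt_trichotomy y1 y2) as [H|[H|H]]; auto.
    + destruct (B2 _ H) as [k Hk]. discriminate (IH1 _ _ _ A1 Hk).
    + destruct (B1 _ H) as [k Hk]. discriminate (IH1 _ _ _ A2 Hk).
Qed.

Fixpoint all_some (os : list (option nat)) : option (list nat) :=
  match os with
  | [] => Some []
  | o :: os' =>
      match o, all_some os' with
      | Some y, Some ys => Some (y :: ys)
      | _, _ => None
      end
  end.

Fixpoint prec_iter (F G : list nat -> option nat) (xs : list nat) (k : nat) : option nat :=
  match k with
  | 0 => F xs
  | S k' => match prec_iter F G xs k' with Some y => G (k' :: y :: xs) | None => None end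
  end.

Fixpoint mu_search (F : list nat -> option nat) (xs : list nat) (fuel m : nat) : option nat :=
  match fuel with
  | 0 => None
  | S fuel' =>
      match F (m :: xs) with
      | Some 0 => Some m
      | Some (S _) => mu_search F xs fuel' (S m)
      | None => None
      end
  end.

(* [run f t xs] evaluates [f] with every unbounded search cut off after [t] candidates. *)
Fixpoint run (f : mrec) (t : nat) (xs : list nat) : option nat :=
  match f with
  | MZero => Some 0
  | MSucc => Some (S (nth 0 xs 0))
  | MProj i => Some (nth i xs 0)
  | MComp h gs =>
      match all_some (map (fun g => run g t xs) gs) with
      | Some ys => run h t ys
      | None => None
      end
  | MPrec f1 g1 =>
      match xs with
      | [] => None
      | x :: xs' => prec_iter (run f1 t) (run g1 t) xs' x
      end
  | MMu f1 => mu_search (run f1 t) xs t 0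
  end.

Definition extends (F F' : list nat -> option nat) : Prop :=
  forall l y, F l = Some y -> F' l = Some y.

Lemma all_some_map_extends {A : Type} (F F' : A -> option nat) (l : list A) ys :
  (forall a, In a l -> forall y, F a = Some y -> F' a = Some y) ->
  all_some (map F l) = Some ys -> all_some (map F' l) = Some ys.
Proof.
  revert ys; induction l as [|a l IH]; intros ys HF H; simpl in *; auto.
  destruct (F a) eqn:Ea, (all_some (map F l)) eqn:El; try discriminate.
  now rewrite (HF a (or_introl eq_refl) _ Ea), (IH l0 (fun b Hb => HF b (or_intror Hb)) eq_refl).
Qed.

Lemma prec_iter_extends F G F' G' xs k y : extends F F' -> extends G G' ->
  prec_iter F G xs k = Some y -> prec_iter F' G' xs k = Some y.
Proof.
  intros HF HG. revert y; induction k; simpl; intros y H; auto.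
  destruct (prec_iter F G xs k) eqn:E; [|discriminate].
  rewrite (IHk n eq_refl). auto.
Qed.

Lemma mu_search_extends F F' xs u u' m y : extends F F' -> u <= u' ->
  mu_search F xs u m = Some y -> mu_search F' xs u' m = Some y.
Proof.
  intros HF. revert u' m; induction u; simpl; intros u' m Hu H; [discriminate|].
  destruct u' as [|u']; [lia|]. simpl.
  destruct (F (m :: xs)) as [[|z]|] eqn:E; try discriminate; rewrite (HF _ _ E); auto.
  apply IHu; auto; lia.
Qed.

Lemma run_mono f : forall t t' xs y, t <= t' -> run f t xs = Some y -> run f t' xs = Some y.
Proof.
  induction f as [| |i|h gs IHh IHgs|f1 f2 IH1 IH2|f1 IH1] using mrec_ind_nested;
    intros t t' xs y Ht Hr; auto; simpl in *.
  - destruct (all_some (map (fun g => run g t xs) gs)) eqn:E; [|discriminate].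
    rewrite Forall_forall in IHgs.
    rewrite (all_some_map_extends _ (fun g => run g t' xs) _ _
               (fun g Hg z => IHgs g Hg _ _ _ _ Ht) E).
    eauto.
  - destruct xs; [discriminate|].
    eapply prec_iter_extends; [| |exact Hr]; intros l z; eauto.
  - eapply mu_search_extends; [|exact Ht|exact Hr]. intros l z; eauto.
Qed.

Lemma run_sound f : forall t xs y, run f t xs = Some y -> eval f xs y.
Proof.
  induction f as [| |i|h gs IHh IHgs|f1 f2 IH1 IH2|f1 IH1] using mrec_ind_nested;
    intros t xs y Hr; simpl in Hr; try (injection Hr as <-; constructor).
  - destruct (all_some (map (fun g => run g t xs) gs)) as [ys|] eqn:E; [|discriminate].
    apply ev_comp with ys; [|eauto].
    clear Hr. revert ys E. induction IHgs as [|g gs Hg _ IH]; simpl; intros ys E.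
    + injection E as <-. constructor.
    + destruct (run g t xs) eqn:E1, (all_some (map (fun g => run g t xs) gs)) eqn:E2;
        try discriminate.
      injection E as <-. constructor; eauto.
  - destruct xs as [|x xs]; [discriminate|].
    revert y Hr. induction x; simpl; intros y Hr.
    + constructor. eauto.
    + destruct (prec_iter (run f1 t) (run f2 t) xs x) eqn:E; [|discriminate].
      eapply ev_precS; eauto.
  - enough (Hs : forall u m, (forall j, j < m -> exists k, eval f1 (j :: xs) (S k)) ->
               mu_search (run f1 t) xs u m = Some y -> eval (MMu f1) xs y)
      by (apply (Hs t 0); [intros; lia|exact Hr]).
    induction u; simpl; intros m Hm Hs; [discriminate|].
    destruct (run f1 t (m :: xs)) as [[|z]|] eqn:E; try discriminate.
    + injection Hs as <-. constructor; eauto.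
    + apply (IHu (S m)); auto. intros j Hj.
      destruct (Nat.eq_dec j m); [subst; eauto|]. apply Hm; lia.
Qed.

Lemma uniform_bound (P : nat -> nat -> Prop) n :
  (forall j t t', P j t -> t <= t' -> P j t') ->
  (forall j, j < n -> exists t, P j t) -> exists T, forall j, j < n -> P j T.
Proof.
  intros Hm. induction n; intros H.
  - exists 0; intros; lia.
  - destruct IHn as [T1 HT1]; [intros; apply H; lia|].
    destruct (H n) as [T2 HT2]; [lia|].
    exists (max T1 T2). intros j Hj.
    destruct (Nat.eq_dec j n) as [->|Hne].
    + eapply Hm; [exact HT2|lia].
    + eapply Hm; [apply HT1; lia|lia].
Qed.

Lemma mu_search_finds F xs d : forall m u, d < u ->
  (forall i, m <= i < m + d -> exists k, F (i :: xs) = Some (S k)) ->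
  F (m + d :: xs) = Some 0 -> mu_search F xs u m = Some (m + d).
Proof.
  induction d; intros m u Hu Hi Hz; destruct u as [|u]; try lia; simpl.
  - rewrite Nat.add_0_r in *. now rewrite Hz.
  - destruct (Hi m) as [k Hk]; [lia|]. rewrite Hk.
    replace (m + S d) with (S m + d) in * by lia.
    apply IHd; auto; [lia|]. intros i Hi'. apply Hi; lia.
Qed.

Lemma run_complete f : forall xs y, eval f xs y -> exists t, run f t xs = Some y.
Proof.
  induction f as [| |i|h gs IHh IHgs|f1 f2 IH1 IH2|f1 IH1] using mrec_ind_nested;
    intros xs y He; try (inversion He; subst; exists 0; reflexivity).
  - destruct (eval_comp_inv _ _ _ _ He) as [ys [Hgs Hh]].
    assert (Hrs : exists t, all_some (map (fun g => run g t xs) gs) = Some ys).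
    { clear He Hh. revert ys Hgs.
      induction IHgs as [|g gs Hg _ IH]; intros ys Hgs.
      - rewrite (evals_nil_inv _ _ Hgs). now exists 0.
      - destruct (evals_inv _ _ _ _ Hgs) as [y0 [ys1 [-> [E1 E2]]]].
        destruct (Hg _ _ E1) as [t1 Ht1], (IH _ E2) as [t2 Ht2].
        exists (max t1 t2). simpl.
        rewrite (run_mono _ t1 (max t1 t2) _ _ ltac:(lia) Ht1).
        erewrite all_some_map_extends; [reflexivity| |exact Ht2].
        intros g' _ z; apply run_mono; lia. }
    destruct Hrs as [t1 Ht1], (IHh _ _ Hh) as [t2 Ht2].
    exists (max t1 t2). simpl.
    erewrite all_some_map_extends; [| |exact Ht1]; [|intros g' _ z; apply run_mono; lia].
    eapply run_mono; [|exact Ht2]; lia.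
  - destruct xs as [|x xs]; [now apply eval_prec_nil in He|].
    simpl. revert y He. induction x; intros y He; apply eval_prec_inv in He; simpl; auto.
    destruct He as [y0 [A B]].
    destruct (IHx _ A) as [t1 Ht1], (IH2 _ _ B) as [t2 Ht2].
    exists (max t1 t2).
    erewrite prec_iter_extends; [| | |exact Ht1]; try (intros l w; apply run_mono; lia).
    eapply run_mono; [|exact Ht2]; lia.
  - destruct (eval_mu_inv _ _ _ He) as [H0 Hlt].
    destruct (IH1 _ _ H0) as [t0 Ht0].
    destruct (uniform_bound (fun j t => exists k, run f1 t (j :: xs) = Some (S k)) y)
      as [T HT].
    { intros j t t' [k Hk] Htt. exists k. eapply run_mono; eauto. }
    { intros j Hj. destruct (Hlt j Hj) as [k Hk]. destruct (IH1 _ _ Hk) as [t Ht]. eauto. }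
    exists (max (max t0 T) (S y)). simpl.
    apply (mu_search_finds _ _ y 0); try lia.
    + intros i Hi. destruct (HT i ltac:(lia)) as [k Hk].
      exists k. eapply run_mono; [|exact Hk]; lia.
    + eapply run_mono; [|exact Ht0]; lia.
Qed.

Definition option_code (o : option nat) : nat :=
  match o with Some y => S y | None => 0 end.

Definition is_some {A : Type} (o : option A) : bool :=
  match o with Some _ => true | None => false end.

Definition ifz (x a b : nat) : nat := match x with 0 => a | S _ => b end.

Definition One : mrec := MComp MSucc [MZero].
Definition IfzCode : mrec := MPrec (MProj 0) (MProj 3).
Definition PredCode : mrec := MPrec MZero (MProj 0).
Definition MonusCode : mrec := MPrec (MProj 0) (MComp PredCode [MProj 1]).

Definition Ifz (x a b : mrec) : mrec := MComp IfzCode [x; a; b].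
Definition Pred (x : mrec) : mrec := MComp PredCode [x].
Definition Succ (x : mrec) : mrec := MComp MSucc [x].
Definition Sub (x y : mrec) : mrec := MComp MonusCode [y; x].
Definition projs (s n : nat) : list mrec := map MProj (seq s n).

Lemma eval_eq f l v v' : eval f l v -> v = v' -> eval f l v'.
Proof. now intros ? <-. Qed.

Lemma One_eval l : eval One l 1.
Proof. eapply ev_comp; [repeat constructor|]. apply ev_succ. Qed.

Lemma IfzCode_eval x a b : eval IfzCode [x; a; b] (ifz x a b).
Proof.
  induction x.
  - constructor. apply (ev_proj 0).
  - eapply ev_precS; [exact IHx|]. apply (ev_proj 3).
Qed.

Lemma PredCode_eval x r : eval PredCode (x :: r) (pred x).
Proof.
  induction x.
  - repeat constructor.
  - eapply ev_precS; [exact IHx|]. apply (ev_proj 0).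
Qed.

Lemma MonusCode_eval m n r : eval MonusCode (m :: n :: r) (n - m).
Proof.
  induction m.
  - constructor. rewrite Nat.sub_0_r. apply (ev_proj 0).
  - eapply ev_precS; [exact IHm|].
    replace (n - S m) with (pred (n - m)) by lia.
    eapply ev_comp; [repeat constructor|]. apply PredCode_eval.
Qed.

Lemma Ifz_eval x a b l vx va vb : eval x l vx -> eval a l va -> eval b l vb ->
  eval (Ifz x a b) l (ifz vx va vb).
Proof. intros. eapply ev_comp; [repeat constructor; eauto|]. apply IfzCode_eval. Qed.

Lemma Pred_eval x l v : eval x l v -> eval (Pred x) l (pred v).
Proof. intros. eapply ev_comp; [repeat constructor; eauto|]. apply PredCode_eval. Qed.

Lemma Succ_eval x l v : eval x l v -> eval (Succ x) l (S v).
Proof. intros. eapply ev_comp; [repeat constructor; eauto|]. apply ev_succ. Qed.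

Lemma Sub_eval x y l vx vy : eval x l vx -> eval y l vy -> eval (Sub x y) l (vx - vy).
Proof. intros. eapply ev_comp; [repeat constructor; eauto|]. apply MonusCode_eval. Qed.

Lemma projs_eval pre l : evals (projs (length pre) (length l)) (pre ++ l) l.
Proof.
  revert pre; induction l as [|a l IH]; intros pre; simpl; constructor.
  - apply eval_eq with (nth (length pre) (pre ++ a :: l) 0); [constructor|].
    now rewrite nth_middle.
  - replace (pre ++ a :: l) with ((pre ++ [a]) ++ l) by now rewrite <- app_assoc.
    replace (S (length pre)) with (length (pre ++ [a])) by (rewrite length_app; simpl; lia).
    apply IH.
Qed.

Lemma projs_eval_len k n pre l : length pre = k -> length l = n ->
  evals (projs k n) (pre ++ l) l.
Proof. intros <- <-; apply projs_eval. Qed.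

Definition AllSome (cs : list mrec) : mrec := fold_right (fun c acc => Ifz c MZero acc) One cs.

Lemma AllSome_eval cs os l : Forall2 (fun c o => eval c l (option_code o)) cs os ->
  eval (AllSome cs) l (Nat.b2n (is_some (all_some os))).
Proof.
  induction 1 as [|c o cs os Hc _ IH]; simpl; [apply One_eval|].
  eapply eval_eq; [apply Ifz_eval; [exact Hc|constructor|exact IH]|].
  destruct o; simpl; [destruct (all_some os)|]; reflexivity.
Qed.

Lemma Preds_eval cs os l : Forall2 (fun c o => eval c l (option_code o)) cs os ->
  evals (map Pred cs) l (map (fun o => pred (option_code o)) os).
Proof. induction 1; simpl; constructor; auto. now apply Pred_eval. Qed.

Lemma all_some_Some os ys : all_some os = Some ys -> map (fun o => pred (option_code o)) os = ys.
Proof.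
  revert ys; induction os as [|o os IH]; simpl; intros ys E.
  - now injection E as <-.
  - destruct o as [y|], (all_some os); try discriminate.
    injection E as <-. simpl. f_equal. auto.
Qed.

(* Search state: [1] while searching, [0] once a candidate diverged, [m + 2] once [m] is found. *)
Definition mu_step (F : list nat -> option nat) (xs : list nat) (j s : nat) : nat :=
  match s with
  | 1 => match F (j :: xs) with None => 0 | Some 0 => S (S j) | Some (S _) => 1 end
  | _ => s
  end.

Fixpoint mu_state (F : list nat -> option nat) (xs : list nat) (j : nat) : nat :=
  match j with 0 => 1 | S j' => mu_step F xs j' (mu_state F xs j') end.

Lemma mu_state_stable F xs m j : mu_state F xs m <> 1 -> mu_state F xs (m + j) = mu_state F xs m.
Proof.
  intros H. induction j; [now rewrite Nat.add_0_r|].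
  rewrite Nat.add_succ_r. simpl. rewrite IHj. unfold mu_step.
  destruct (mu_state F xs m) as [|[|]]; congruence.
Qed.

Lemma mu_state_search F xs u : forall m, mu_state F xs m = 1 ->
  pred (mu_state F xs (m + u)) = option_code (mu_search F xs u m).
Proof.
  induction u; intros m H; [now rewrite Nat.add_0_r, H|].
  rewrite <- Nat.add_succ_comm. cbn [mu_search].
  assert (E : mu_state F xs (S m) = mu_step F xs m 1) by (simpl; now rewrite H).
  unfold mu_step in E. destruct (F (m :: xs)) as [[|z]|].
  - now rewrite mu_state_stable, E by (rewrite E; discriminate).
  - now apply IHu.
  - now rewrite mu_state_stable, E by (rewrite E; discriminate).
Qed.

Definition MuStep (v : mrec) : mrec :=
  Ifz (Pred (MProj 1))
    (Ifz (MProj 1) MZero (Ifz v MZero (Ifz (Pred v) (Succ (Succ (MProj 0))) One)))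
    (MProj 1).

Fixpoint clocked (f : mrec) (n : nat) : mrec :=
  match f with
  | MZero => One
  | MSucc => Succ (Succ (MProj 1))
  | MProj i => Succ (MProj (S i))
  | MComp h gs =>
      let cs := map (fun g => clocked g n) gs in
      Ifz (AllSome cs) MZero (MComp (clocked h (length gs)) (MProj 0 :: map Pred cs))
  | MPrec f1 g1 =>
      match n with
      | 0 => MZero
      | S n' =>
          let step := MComp (clocked g1 (S (S n')))
                        (MProj 2 :: MProj 0 :: Pred (MProj 1) :: projs 3 n') in
          MComp (MPrec (clocked f1 n') (Ifz (MProj 1) MZero step))
                (MProj 1 :: MProj 0 :: projs 2 n')
      end
  | MMu f1 =>
      Pred (MComp (MPrec One (MuStep (MComp (clocked f1 (S n)) (MProj 2 :: MProj 0 :: projs 3 n))))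
                  (MProj 0 :: MProj 0 :: projs 1 n))
  end.

Definition clocked_correct (f : mrec) : Prop :=
  forall n t xs, length xs = n -> eval (clocked f n) (t :: xs) (option_code (run f t xs)).

Lemma clocked_comp_correct h gs :
  clocked_correct h -> Forall clocked_correct gs -> clocked_correct (MComp h gs).
Proof.
  intros IHh IHgs n t xs Hl; simpl.
  assert (HF : Forall2 (fun c o => eval c (t :: xs) (option_code o))
                 (map (fun g => clocked g n) gs) (map (fun g => run g t xs) gs)).
  { induction IHgs; simpl; constructor; auto. }
  eapply eval_eq.
  - apply Ifz_eval; [apply (AllSome_eval _ _ _ HF)|constructor|].
    eapply ev_comp; [constructor; [apply (ev_proj 0)|apply (Preds_eval _ _ _ HF)]|].
    apply IHh. now rewrite !length_map.
  - destruct (all_some (map (fun g => run g t xs) gs)) eqn:E; simpl; auto.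
    now rewrite (all_some_Some _ _ E).
Qed.

Lemma clocked_prec_correct f g :
  clocked_correct f -> clocked_correct g -> clocked_correct (MPrec f g).
Proof.
  intros IHf IHg [|n] t xs Hl; simpl.
  - destruct xs; [constructor|discriminate].
  - destruct xs as [|x xs]; [discriminate|]. injection Hl as Hl.
    eapply ev_comp.
    + constructor; [apply (ev_proj 1)|]. constructor; [apply (ev_proj 0)|].
      change (t :: x :: xs) with ([t; x] ++ xs). now apply projs_eval_len.
    + induction x as [|x IHx]; [constructor; now apply IHf|].
      eapply ev_precS; [exact IHx|]. simpl.
      set (o := prec_iter (run f t) (run g t) xs x).
      eapply eval_eq.
      * apply Ifz_eval; [apply (ev_proj 1)|constructor|].
        eapply ev_comp; [|apply IHg with (xs := x :: pred (option_code o) :: xs); simpl; lia].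
        constructor; [apply (ev_proj 2)|]. constructor; [apply (ev_proj 0)|].
        constructor; [apply Pred_eval, (ev_proj 1)|].
        change (x :: option_code o :: t :: xs) with ([x; option_code o; t] ++ xs).
        now apply projs_eval_len.
      * now destruct o.
Qed.

Lemma MuStep_eval v F xs j s l : eval v (j :: s :: l) (option_code (F (j :: xs))) ->
  eval (MuStep v) (j :: s :: l) (mu_step F xs j s).
Proof.
  intros Hv. eapply eval_eq.
  - apply Ifz_eval; [apply Pred_eval, (ev_proj 1)| |apply (ev_proj 1)].
    apply Ifz_eval; [apply (ev_proj 1)|constructor|].
    apply Ifz_eval; [exact Hv|constructor|].
    apply Ifz_eval; [apply Pred_eval, Hv|apply Succ_eval, Succ_eval, (ev_proj 0)|apply One_eval].
  - unfold mu_step. destruct s as [|[|s]]; simpl; auto.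
    now destruct (F (j :: xs)) as [[|]|].
Qed.

Lemma clocked_mu_correct f : clocked_correct f -> clocked_correct (MMu f).
Proof.
  intros IHf n t xs Hl; simpl.
  assert (Hstate : forall j, eval (MPrec One (MuStep (MComp (clocked f (S n))
                                                     (MProj 2 :: MProj 0 :: projs 3 n))))
                                 (j :: t :: xs) (mu_state (run f t) xs j)).
  { induction j as [|j IHj]; [constructor; apply One_eval|].
    eapply ev_precS; [exact IHj|].
    set (s := mu_state (run f t) xs j).
    change (mu_state (run f t) xs (S j)) with (mu_step (run f t) xs j s).
    apply MuStep_eval.
    eapply ev_comp; [|apply IHf with (xs := j :: xs); simpl; lia].
    constructor; [apply (ev_proj 2)|]. constructor; [apply (ev_proj 0)|].
    change (j :: s :: t :: xs) with ([j; s; t] ++ xs). now apply projs_eval_len. }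
  eapply eval_eq.
  - apply Pred_eval. eapply ev_comp; [|apply (Hstate t)].
    constructor; [apply (ev_proj 0)|]. constructor; [apply (ev_proj 0)|].
    change (t :: xs) with ([t] ++ xs). now apply projs_eval_len.
  - apply (mu_state_search _ _ t 0). reflexivity.
Qed.

Lemma clocked_eval f : clocked_correct f.
Proof.
  induction f using mrec_ind_nested; intros n t xs Hl; simpl.
  - apply One_eval.
  - apply Succ_eval, Succ_eval, (ev_proj 1).
  - apply Succ_eval, (ev_proj (S i)).
  - now apply clocked_comp_correct.
  - now apply clocked_prec_correct.
  - now apply clocked_mu_correct.
Qed.

Definition IsZero (x : mrec) : mrec := Ifz x One MZero.
Definition And (x y : mrec) : mrec := Ifz x MZero y.
Definition Or (x y : mrec) : mrec := Ifz x y One.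
Definition Ltb (x y : mrec) : mrec := IsZero (Sub (Succ x) y).
Definition Eqb (x y : mrec) : mrec := And (IsZero (Sub x y)) (IsZero (Sub y x)).

Lemma IsZero_eval x l v : eval x l v -> eval (IsZero x) l (Nat.b2n (v =? 0)).
Proof.
  intros H. eapply eval_eq; [apply Ifz_eval; [exact H|apply One_eval|constructor]|].
  now destruct v.
Qed.

Lemma IsZero_negb_eval x l b : eval x l (Nat.b2n b) -> eval (IsZero x) l (Nat.b2n (negb b)).
Proof. intros H. eapply eval_eq; [apply (IsZero_eval _ _ _ H)|]. now destruct b. Qed.

Lemma And_eval x y l b1 b2 : eval x l (Nat.b2n b1) -> eval y l (Nat.b2n b2) ->
  eval (And x y) l (Nat.b2n (b1 && b2)).
Proof.
  intros. eapply eval_eq; [apply Ifz_eval; eauto; constructor|]. now destruct b1.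
Qed.

Lemma Or_eval x y l b1 b2 : eval x l (Nat.b2n b1) -> eval y l (Nat.b2n b2) ->
  eval (Or x y) l (Nat.b2n (b1 || b2)).
Proof.
  intros. eapply eval_eq; [apply Ifz_eval; eauto; apply One_eval|]. now destruct b1.
Qed.

Lemma Ltb_eval x y l vx vy : eval x l vx -> eval y l vy ->
  eval (Ltb x y) l (Nat.b2n (vx <? vy)).
Proof.
  intros. eapply eval_eq; [apply IsZero_eval, Sub_eval; [apply Succ_eval|]; eauto|].
  f_equal. apply eq_true_iff_eq. rewrite Nat.eqb_eq, Nat.ltb_lt. lia.
Qed.

Lemma Eqb_eval x y l vx vy : eval x l vx -> eval y l vy ->
  eval (Eqb x y) l (Nat.b2n (vx =? vy)).
Proof.
  intros. eapply eval_eq; [apply And_eval; apply IsZero_eval, Sub_eval; eauto|].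
  f_equal. apply eq_true_iff_eq. rewrite andb_true_iff, !Nat.eqb_eq. lia.
Qed.

Definition forall_upto (k : nat) (b : nat -> bool) : bool := forallb b (seq 0 (S k)).

Lemma forall_upto_spec k b : forall_upto k b = true <-> forall j, j <= k -> b j = true.
Proof.
  unfold forall_upto. rewrite forallb_forall.
  split; intros H j Hj; apply H; apply in_seq in Hj || apply in_seq; lia.
Qed.

Definition BAll (n : nat) (c : mrec) : mrec :=
  MPrec (MComp c (MZero :: projs 0 n)) (And (MProj 1) (MComp c (Succ (MProj 0) :: projs 2 n))).

Lemma BAll_eval n c ps b k : length ps = n ->
  (forall j, eval c (j :: ps) (Nat.b2n (b j))) ->
  eval (BAll n c) (k :: ps) (Nat.b2n (forall_upto k b)).
Proof.
  intros Hl Hb. induction k as [|k IHk].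
  - constructor. eapply eval_eq; [eapply ev_comp; [|apply Hb]|].
    + constructor; [constructor|]. now apply (projs_eval_len 0 n []).
    + unfold forall_upto; simpl. now destruct (b 0).
  - eapply ev_precS; [exact IHk|].
    eapply eval_eq; [apply And_eval with (b1 := forall_upto k b); [apply (ev_proj 1)|]|].
    + eapply ev_comp; [|apply Hb]. constructor; [apply Succ_eval, (ev_proj 0)|].
      change (k :: Nat.b2n (forall_upto k b) :: ps) with ([k; Nat.b2n (forall_upto k b)] ++ ps).
      now apply projs_eval_len.
    + unfold forall_upto. now rewrite (seq_S (S k)), forallb_app; simpl; rewrite andb_true_r.
Qed.

Lemma least_witness (P : nat -> bool) k : P k = true ->
  exists j, P j = true /\ forall i, i < j -> P i = false.
Proof.
  induction k as [k IH] using lt_wf_ind; intros Hk.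
  destruct (classic (exists i, i < k /\ P i = true)) as [[i [Hi Pi]]|Hno].
  - exact (IH i Hi Pi).
  - exists k. split; auto. intros i Hi. apply not_true_is_false. intros Pi. eauto.
Qed.

Lemma computable_rel_of_decider (R : nat -> nat -> Prop) (c : mrec) (d : nat -> nat -> bool) :
  (forall a b, eval c [a; b] (Nat.b2n (d a b))) ->
  (forall a b, R a b <-> d a b = true) -> computable_rel R.
Proof.
  intros Hc HR. exists c. intros a b. rewrite HR.
  split; intros H; eapply eval_eq; eauto.
  - now rewrite H.
  - now rewrite (not_true_is_false _ H).
Qed.

Lemma ce_rel_of_search (R : nat -> nat -> Prop) (c : mrec) (d : nat -> nat -> nat -> bool) :
  (forall k a b, eval c [k; a; b] (Nat.b2n (negb (d k a b)))) ->
  (forall a b, R a b <-> exists k, d k a b = true) -> ce_rel R.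
Proof.
  intros Hc HR. exists (MMu c). intros a b. rewrite HR. split.
  - intros [k Hk]. destruct (least_witness (fun k => d k a b) k Hk) as [j [Hj Hlt]].
    exists j. constructor.
    + eapply eval_eq; [apply Hc|]. now rewrite Hj.
    + intros i Hi. exists 0. eapply eval_eq; [apply Hc|]. now rewrite (Hlt i Hi).
  - intros [y Hy]. apply eval_mu_inv in Hy as [Hy _].
    exists y. pose proof (eval_functional _ _ _ _ Hy (Hc y a b)) as E.
    now destruct (d y a b).
Qed.

(* Counts down from [n] to [0], then restarts at the current index, so every value recurs
   infinitely often. *)
Fixpoint label (n : nat) : nat :=
  match n with
  | 0 => 0
  | S k => match label k with 0 => S k | S l => l end
  end.

Lemma label_le n : label n <= n.
Proof. induction n; simpl; auto. destruct (label n); lia. Qed.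

Lemma label_countdown j : forall n v, label n = v + j -> label (n + j) = v.
Proof.
  induction j; intros n v H; [rewrite Nat.add_0_r; lia|].
  rewrite <- Nat.add_succ_comm. apply IHj. simpl. rewrite H, Nat.add_succ_r. reflexivity.
Qed.

Lemma label_recurs a N : exists n, N <= n /\ label n = a.
Proof.
  set (m := N + a + label (N + a)).
  assert (Hm : label m = 0) by (apply label_countdown; lia).
  assert (Hm1 : label (S m) = S m) by (simpl; now rewrite Hm).
  exists (S m + (S m - a)). split; [lia|].
  apply label_countdown. rewrite Hm1. lia.
Qed.

Section Construction.

Variable prec : nat -> nat -> Prop.
Variable Q : nat -> nat -> nat -> Prop.
Hypothesis prec_trans : transitive_rel prec.
Hypothesis prec_approx : forall a c, prec a c <-> exists u, Q u a c.
Hypothesis approx_mono : forall u u' a c, u <= u' -> Q u a c -> Q u' a c.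

Definition trans_below (k u : nat) : Prop :=
  forall a b c, a <= k -> b <= k -> c <= k -> Q u a b -> Q u b c -> Q u a c.

(* The transitivity requirements at stage [n] are what makes [strict] transitive although the
   stages [Q n] themselves need not be. *)
Definition strict (m n : nat) : Prop :=
  m < n /\ trans_below m n /\ trans_below (label n) n /\ Q n (label m) (label n).

Definition sq (m n : nat) : Prop := m = n \/ strict m n.

Definition lift_ideal (I : nat -> Prop) (m : nat) : Prop :=
  exists n, strict m n /\ I (label n).

Definition label_image (J : nat -> Prop) (a : nat) : Prop :=
  exists m, J m /\ label m = a.

Lemma trans_below_le k j u : trans_below k u -> j <= k -> trans_below j u.
Proof. intros H Hj a b c Ha Hb Hc. apply H; lia. Qed.

Lemma trans_below_max k j u : trans_below k u -> trans_below j u -> trans_below (max k j) u.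
Proof. intros. destruct (Nat.max_spec k j) as [[_ ->]|[_ ->]]; auto. Qed.

Lemma approx_eventually a c : prec a c -> exists U, forall u, U <= u -> Q u a c.
Proof.
  intros H. apply prec_approx in H as [u Hu]. exists u. intros; eauto.
Qed.

Lemma trans_below_eventually k : exists U, forall u, U <= u -> trans_below k u.
Proof.
  destruct (uniform_bound (fun a t => forall c, c <= k -> prec a c -> Q t a c) (S k)) as [U HU].
  { intros j t t' H Htt c Hc Hp. eauto. }
  { intros a _.
    destruct (uniform_bound (fun c t => prec a c -> Q t a c) (S k)) as [U HU].
    { intros j t t' H Htt Hp. eauto. }
    { intros c _. destruct (classic (prec a c)) as [Hp|Hp].
      - apply prec_approx in Hp as [u Hu]. eauto.
      - exists 0. tauto. }
    exists U. intros c Hc. apply HU. lia. }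
  exists U. intros u Hu a b c Ha Hb Hc H1 H2.
  apply approx_mono with U; [exact Hu|]. apply HU; [lia|lia|].
  apply (prec_trans a b c); apply prec_approx; eauto.
Qed.

Lemma strict_lt m n : strict m n -> m < n.
Proof. now intros []. Qed.

Lemma strict_prec m n : strict m n -> prec (label m) (label n).
Proof. intros (_ & _ & _ & H). apply prec_approx. eauto. Qed.

Lemma strict_trans m k n : strict m k -> strict k n -> strict m n.
Proof.
  intros (H1 & H2 & H3 & H4) (G1 & G2 & G3 & G4).
  split; [lia|]. split; [apply (trans_below_le k); [exact G2|lia]|]. split; [exact G3|].
  pose proof (label_le m). pose proof (label_le k).
  apply (trans_below_max k (label n) n G2 G3 (label m) (label k) (label n)); try lia; auto.
  apply approx_mono with k; [lia|exact H4].
Qed.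

Lemma strict_start_eventually m x : prec (label m) x ->
  exists N, forall n, N <= n -> m < n /\ trans_below m n /\ Q n (label m) x.
Proof.
  intros Hp. destruct (approx_eventually _ _ Hp) as [U1 HU1].
  destruct (trans_below_eventually m) as [U2 HU2].
  exists (max (S m) (max U1 U2)). intros n Hn.
  repeat split; [lia|apply HU2; lia|apply HU1; lia].
Qed.

Lemma strict_eventually m c : prec (label m) c ->
  exists N, forall n, N <= n -> label n = c -> strict m n.
Proof.
  intros Hp. destruct (strict_start_eventually _ _ Hp) as [N1 HN1].
  destruct (trans_below_eventually c) as [U2 HU2].
  exists (max N1 U2). intros n Hn <-. destruct (HN1 n ltac:(lia)) as (A & B & D).
  repeat split; auto. apply HU2; lia.
Qed.

Lemma strict_exists m c N0 : prec (label m) c -> exists n, N0 <= n /\ label n = c /\ strict m n.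
Proof.
  intros Hp. destruct (strict_eventually _ _ Hp) as [N HN].
  destruct (label_recurs c (max N N0)) as [n [Hn Hc]].
  exists n. split; [lia|split; [exact Hc|]]. apply HN; auto; lia.
Qed.

Lemma strict_of_stage m m' n : strict m n -> m' < n -> trans_below m' n ->
  Q n (label m') (label m) -> strict m' n.
Proof.
  intros (H1 & H2 & H3 & H4) G1 G2 G3. repeat split; auto.
  pose proof (label_le m). pose proof (label_le m').
  apply (trans_below_max (max m' m) (label n) n (trans_below_max m' m n G2 H2) H3
           (label m') (label m) (label n)); auto; lia.
Qed.

Lemma sq_partial_order : partial_order sq.
Proof.
  split; [now left|]. split.
  - intros a b [H|H] [G|G]; auto. apply strict_lt in H, G. lia.
  - intros a b c [<-|H] [<-|G]; unfold sq; auto. right; eapply strict_trans; eauto.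
Qed.

Section NonPrincipal.

Variable J : nat -> Prop.
Hypothesis J_ideal : is_ideal sq J.
Hypothesis J_nonprincipal : ~ principal sq J.

Lemma nonprincipal_strict_above m : J m -> exists n, J n /\ strict m n.
Proof.
  intros Hm. destruct J_ideal as [_ [_ Hdir]].
  assert (exists b, J b /\ ~ sq b m) as [b [Hb Hnb]].
  { apply NNPP. intros Hn. apply J_nonprincipal. exists m. split; auto. intros b Hb.
    apply NNPP. intros Hc. apply Hn. eauto. }
  destruct (Hdir m b Hm Hb) as [c [Hc [[<-|H1] H2]]]; [contradiction|eauto].
Qed.

Lemma nonprincipal_strict_above_large m N : J m -> exists n, J n /\ strict m n /\ N <= n.
Proof.
  intros Hm. induction N.
  - destruct (nonprincipal_strict_above m Hm) as [n [Hn Hs]]. exists n. auto with arith.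
  - destruct IHN as [n [Hn [Hs HN]]].
    destruct (nonprincipal_strict_above n Hn) as [k [Hk Hs']].
    exists k. split; [exact Hk|split; [eapply strict_trans; eauto|]].
    apply strict_lt in Hs'. lia.
Qed.

(* [m'] is strictly below every [n] in [J] far enough above [m]. *)
Lemma nonprincipal_down m m' : J m -> prec (label m') (label m) -> J m'.
Proof.
  intros Hm Hp. destruct (strict_start_eventually m' _ Hp) as [N HN].
  destruct (nonprincipal_strict_above_large m N Hm) as [n [Hn [Hs HNn]]].
  destruct (HN n HNn) as (A & B & D).
  destruct J_ideal as [_ [Hlow _]]. apply (Hlow n m'); auto.
  right. eapply strict_of_stage; eauto.
Qed.

Lemma label_image_ideal : is_ideal prec (label_image J).
Proof.
  pose proof J_ideal as [[a0 Ha0] [_ Hdir]]. split; [|split].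
  - exists (label a0), a0. auto.
  - intros a b Hp [m [Hm <-]]. destruct (label_recurs b 0) as [m' [_ <-]].
    exists m'. split; auto. eapply nonprincipal_down; eauto.
  - intros a b [m [Hm <-]] [m' [Hm' <-]].
    destruct (Hdir m m' Hm Hm') as [c [Hc [H1 H2]]].
    destruct (nonprincipal_strict_above c Hc) as [n [Hn Hs]].
    assert (S1 : strict m n) by (destruct H1 as [<-|H1]; [auto|eapply strict_trans; eauto]).
    assert (S2 : strict m' n) by (destruct H2 as [<-|H2]; [auto|eapply strict_trans; eauto]).
    exists (label n). split; [exists n; auto|]. split; eapply strict_prec; eauto.
Qed.

Lemma lift_label_image m : lift_ideal (label_image J) m <-> J m.
Proof.
  split.
  - intros [n [Hs [n' [Hn' Hl]]]]. apply (nonprincipal_down n'); auto.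
    rewrite Hl. eapply strict_prec; eauto.
  - intros Hm. destruct (nonprincipal_strict_above m Hm) as [n [Hn Hs]].
    exists n. split; auto. exists n; auto.
Qed.

End NonPrincipal.

Section Lift.

Variable I : nat -> Prop.
Hypothesis I_ideal : is_ideal prec I.

Lemma lift_ideal_of_label a m : I a -> label m = a -> lift_ideal I m.
Proof.
  intros Ha Hm. destruct I_ideal as [_ [_ Hdir]].
  destruct (Hdir a a Ha Ha) as [c [Hc [Hp _]]].
  destruct (strict_exists m c 0) as [n [_ [Hn Hs]]]; [now rewrite Hm|].
  exists n. split; auto. now rewrite Hn.
Qed.

Lemma lift_ideal_directed m m' : lift_ideal I m -> lift_ideal I m' ->
  exists k, lift_ideal I k /\ strict m k /\ strict m' k.
Proof.
  intros [n [Hs Hn]] [n' [Hs' Hn']]. destruct I_ideal as [_ [_ Hdir]].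
  destruct (Hdir _ _ Hn Hn') as [d [Hd [P1 P2]]].
  assert (Q1 : prec (label m) d) by (eapply prec_trans; [eapply strict_prec|]; eauto).
  assert (Q2 : prec (label m') d) by (eapply prec_trans; [eapply strict_prec|]; eauto).
  destruct (strict_eventually _ _ Q1) as [N1 HN1], (strict_eventually _ _ Q2) as [N2 HN2].
  destruct (label_recurs d (max N1 N2)) as [k [Hk Hkd]].
  exists k. split; [eapply lift_ideal_of_label; eauto|].
  split; [apply HN1|apply HN2]; auto; lia.
Qed.

Lemma lift_ideal_ideal : is_ideal sq (lift_ideal I) /\ ~ principal sq (lift_ideal I).
Proof.
  pose proof I_ideal as [[a Ha] _]. split; [split; [|split]|].
  - destruct (label_recurs a 0) as [m [_ Hm]]. exists m. eapply lift_ideal_of_label; eauto.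
  - intros x y [<-|H] Hx; auto. destruct Hx as [n [Hs Hn]].
    exists n. split; auto. eapply strict_trans; eauto.
  - intros x y Hx Hy. destruct (lift_ideal_directed x y Hx Hy) as [k [Hk [A B]]].
    exists k. split; auto. split; right; auto.
  - intros [x [Hx Hmax]]. destruct (lift_ideal_directed x x Hx Hx) as [k [Hk [A _]]].
    apply strict_lt in A. destruct (Hmax k Hk) as [->|E]; [lia|].
    apply strict_lt in E. lia.
Qed.

Lemma label_image_lift a : label_image (lift_ideal I) a <-> I a.
Proof.
  split.
  - intros [m [[n [Hs Hn]] <-]]. destruct I_ideal as [_ [Hlow _]].
    eapply Hlow; [|exact Hn]. eapply strict_prec; eauto.
  - intros Ha. destruct (label_recurs a 0) as [m [_ Hm]].
    exists m. split; auto. eapply lift_ideal_of_label; eauto.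
Qed.

End Lift.

End Construction.

Definition LabelCode : mrec := MPrec MZero (Ifz (MProj 1) (Succ (MProj 0)) (Pred (MProj 1))).
Definition Label (x : mrec) : mrec := MComp LabelCode [x].

Lemma LabelCode_eval n r : eval LabelCode (n :: r) (label n).
Proof.
  induction n; [repeat constructor|].
  eapply ev_precS; [exact IHn|]. eapply eval_eq.
  - apply Ifz_eval; [apply (ev_proj 1)|apply Succ_eval, (ev_proj 0)|apply Pred_eval, (ev_proj 1)].
  - simpl. now destruct (label n).
Qed.

Lemma Label_eval x l v : eval x l v -> eval (Label x) l (label v).
Proof. intros. eapply ev_comp; [repeat constructor; eauto|apply LabelCode_eval]. Qed.

Definition halts_within (p : mrec) (u a c : nat) : bool := is_some (run p u [a; c]).

Definition halts_stage (p : mrec) (u a c : nat) : Prop := halts_within p u a c = true.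

Lemma halts_stage_spec p a c : (exists y, eval p [a; c] y) <-> exists u, halts_stage p u a c.
Proof.
  unfold halts_stage, halts_within. split.
  - intros [y Hy]. destruct (run_complete _ _ _ Hy) as [u Hu]. exists u. now rewrite Hu.
  - intros [u Hu]. destruct (run p u [a; c]) eqn:E; [|discriminate].
    exists n. eapply run_sound; eauto.
Qed.

Lemma halts_stage_mono p u u' a c : u <= u' -> halts_stage p u a c -> halts_stage p u' a c.
Proof.
  unfold halts_stage, halts_within. intros Hu H.
  destruct (run p u [a; c]) eqn:E; [|discriminate]. now rewrite (run_mono _ _ _ _ _ Hu E).
Qed.

Definition HaltsWithin (p : mrec) (u a c : mrec) : mrec :=
  IsZero (IsZero (MComp (clocked p 2) [u; a; c])).

Lemma HaltsWithin_eval p u a c l vu va vc : eval u l vu -> eval a l va -> eval c l vc ->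
  eval (HaltsWithin p u a c) l (Nat.b2n (halts_within p vu va vc)).
Proof.
  intros. eapply eval_eq; [apply IsZero_eval, IsZero_eval|].
  - eapply ev_comp; [repeat constructor; eauto|]. now apply clocked_eval.
  - unfold halts_within. now destruct (run p vu [va; vc]).
Qed.

Definition trans_below_b (p : mrec) (k u : nat) : bool :=
  forall_upto k (fun a => forall_upto k (fun b => forall_upto k (fun c =>
    implb (halts_within p u a b && halts_within p u b c) (halts_within p u a c)))).

Lemma trans_below_b_spec p k u :
  trans_below_b p k u = true <-> trans_below (halts_stage p) k u.
Proof.
  unfold trans_below_b, trans_below, halts_stage.
  rewrite forall_upto_spec. do 2 setoid_rewrite forall_upto_spec. split.
  - intros H a b c Ha Hb Hc H1 H2. specialize (H a Ha b Hb c Hc).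
    now rewrite H1, H2 in H.
  - intros H a Ha b Hb c Hc. specialize (H a b c Ha Hb Hc).
    destruct (halts_within p u a b), (halts_within p u b c); simpl; auto.
Qed.

(* The innermost body sees the arguments [c; b; a; k; u]. *)
Definition TransBelow (p : mrec) : mrec :=
  let body := Or (IsZero (And (HaltsWithin p (MProj 4) (MProj 2) (MProj 1))
                              (HaltsWithin p (MProj 4) (MProj 1) (MProj 0))))
                 (HaltsWithin p (MProj 4) (MProj 2) (MProj 0)) in
  MComp (BAll 2 (MComp (BAll 3 (MComp (BAll 4 body)
                                  [MProj 2; MProj 0; MProj 1; MProj 2; MProj 3]))
                   [MProj 1; MProj 0; MProj 1; MProj 2]))
        [MProj 0; MProj 0; MProj 1].

Lemma TransBelow_eval p k u : eval (TransBelow p) [k; u] (Nat.b2n (trans_below_b p k u)).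
Proof.
  eapply ev_comp; [repeat constructor|]. apply BAll_eval; [reflexivity|]. intros a.
  eapply ev_comp; [repeat constructor|]. apply BAll_eval; [reflexivity|]. intros b.
  eapply ev_comp; [repeat constructor|]. apply BAll_eval; [reflexivity|]. intros c.
  eapply eval_eq; [apply Or_eval; [apply IsZero_negb_eval, And_eval|];
                   apply HaltsWithin_eval; apply ev_proj|].
  simpl. now destruct (halts_within p u a b && halts_within p u b c).
Qed.

Definition strict_b (p : mrec) (m n : nat) : bool :=
  (m <? n) && trans_below_b p m n && trans_below_b p (label n) n
  && halts_within p n (label m) (label n).

Lemma strict_b_spec p m n : strict_b p m n = true <-> strict (halts_stage p) m n.
Proof.
  unfold strict_b, strict. rewrite !andb_true_iff, Nat.ltb_lt, !trans_below_b_spec.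
  unfold halts_stage. tauto.
Qed.

Definition Strict (p : mrec) : mrec :=
  And (And (And (Ltb (MProj 0) (MProj 1)) (MComp (TransBelow p) [MProj 0; MProj 1]))
           (MComp (TransBelow p) [Label (MProj 1); MProj 1]))
      (HaltsWithin p (MProj 1) (Label (MProj 0)) (Label (MProj 1))).

Lemma Strict_eval p m n : eval (Strict p) [m; n] (Nat.b2n (strict_b p m n)).
Proof.
  repeat apply And_eval.
  - apply Ltb_eval; apply ev_proj.
  - eapply ev_comp; [repeat constructor|apply TransBelow_eval].
  - eapply ev_comp; [|apply TransBelow_eval].
    constructor; [apply Label_eval, (ev_proj 1)|repeat constructor].
  - apply HaltsWithin_eval; [apply (ev_proj 1)|apply Label_eval, ev_proj..].
Qed.

Lemma sq_computable p : computable_rel (sq (halts_stage p)).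
Proof.
  apply computable_rel_of_decider with (Or (Eqb (MProj 0) (MProj 1)) (Strict p))
    (fun m n => (m =? n) || strict_b p m n).
  - intros m n. apply Or_eval; [apply Eqb_eval; apply ev_proj|apply Strict_eval].
  - intros m n. unfold sq. now rewrite orb_true_iff, Nat.eqb_eq, strict_b_spec.
Qed.

Lemma computable_map_continuous {X Y : Type} (beta : nat -> X -> Prop)
  (gamma : nat -> Y -> Prop) (f : X -> Y) :
  computable_map beta gamma f -> continuous_map beta gamma f.
Proof.
  intros [B [_ HB]] V HV x Vfx. destruct (HV (f x) Vfx) as [ns [Hns HV']].
  enough (exists ms, (forall m, In m ms -> beta m x) /\
            (forall y, (forall m, In m ms -> beta m y) -> forall n, In n ns -> gamma n (f y)))
    as [ms [A C]] by (exists ms; split; auto).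
  clear HV'. induction ns as [|n ns IH].
  - exists []. simpl. tauto.
  - destruct IH as [ms [A C]]; [intros; apply Hns; now right|].
    destruct (proj1 (HB n x) (Hns n (or_introl eq_refl))) as [m [Hm Hb]].
    exists (m :: ms). split.
    + intros m' [<-|E]; auto.
    + intros y Hy n' [<-|E].
      * apply HB. exists m. split; auto. apply Hy. now left.
      * apply C; auto. intros; apply Hy; now right.
Qed.

Lemma lift_computable p prec (f : Ideals prec -> NPIdeals (sq (halts_stage p))) :
  (forall I, proj1_sig (f I) = lift_ideal (halts_stage p) (proj1_sig I)) ->
  computable_map (ideal_basis prec) (npideal_basis (sq (halts_stage p))) f.
Proof.
  intros Hf. exists (fun n m => exists k, strict (halts_stage p) n k /\ label k = m). split.
  - apply ce_rel_of_search
      with (IsZero (And (MComp (Strict p) [MProj 1; MProj 0]) (Eqb (Label (MProj 0)) (MProj 2))))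
           (fun k n m => strict_b p n k && (label k =? m)).
    + intros k n m. apply IsZero_negb_eval, And_eval.
      * eapply ev_comp; [repeat constructor|apply Strict_eval].
      * apply Eqb_eval; [apply Label_eval|]; apply ev_proj.
    + intros n m. setoid_rewrite andb_true_iff. setoid_rewrite strict_b_spec.
      now setoid_rewrite Nat.eqb_eq.
  - intros n I. unfold npideal_basis, ideal_basis. rewrite Hf. unfold lift_ideal. split.
    + intros [k [Hs Hk]]. eauto.
    + intros [m [[k [Hs <-]] Hm]]. eauto.
Qed.

Lemma label_image_computable prec Q (g : NPIdeals (sq Q) -> Ideals prec) :
  (forall J, proj1_sig (g J) = label_image (proj1_sig J)) ->
  computable_map (npideal_basis (sq Q)) (ideal_basis prec) g.
Proof.
  intros Hg. exists (fun a m => label m = a). split.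
  - apply ce_rel_of_search with (IsZero (Eqb (Label (MProj 2)) (MProj 1)))
      (fun _ a m => label m =? a).
    + intros k a m. apply IsZero_negb_eval, Eqb_eval; [apply Label_eval|]; apply ev_proj.
    + intros a m. rewrite <- Nat.eqb_eq. split; [eauto|now intros [_ H]].
  - intros a J. unfold npideal_basis, ideal_basis. rewrite Hg. unfold label_image. firstorder.
Qed.

Lemma sig_eq_ext {P : (nat -> Prop) -> Prop} (x y : sig P) :
  (forall n, proj1_sig x n <-> proj1_sig y n) -> x = y.
Proof.
  destruct x as [x Hx], y as [y Hy]; simpl. intros H.
  apply subset_eq_compat. extensionality n. now apply propositional_extensionality.
Qed.

Theorem proposition3 :
  forall prec : nat -> nat -> Prop,
    transitive_rel prec -> ce_rel prec ->
    exists sq : nat -> nat -> Prop,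
      partial_order sq /\ computable_rel sq /\
      computably_homeomorphic (ideal_basis prec) (npideal_basis sq).
Proof.
  intros prec Htrans [p Hp].
  set (Q := halts_stage p).
  assert (Happrox : forall a c, prec a c <-> exists u, Q u a c)
    by (intros a c; rewrite Hp; apply halts_stage_spec).
  pose proof (halts_stage_mono p) as Hmono.
  exists (sq Q). split; [exact (sq_partial_order Q Hmono)|]. split; [apply sq_computable|].
  pose (f := fun I : Ideals prec =>
         exist _ (lift_ideal Q (proj1_sig I))
           (lift_ideal_ideal prec Q Htrans Happrox Hmono _ (proj2_sig I)) : NPIdeals (sq Q)).
  pose (g := fun J : NPIdeals (sq Q) =>
         exist _ (label_image (proj1_sig J))
           (label_image_ideal prec Q Htrans Happrox Hmono _
              (proj1 (proj2_sig J)) (proj2 (proj2_sig J))) : Ideals prec).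
  assert (Hf : computable_map (ideal_basis prec) (npideal_basis (sq Q)) f)
    by (apply lift_computable; reflexivity).
  assert (Hg : computable_map (npideal_basis (sq Q)) (ideal_basis prec) g)
    by (apply label_image_computable; reflexivity).
  exists f, g. repeat split; auto using computable_map_continuous.
  - intros [I HI]. apply sig_eq_ext, (label_image_lift prec Q Htrans Happrox Hmono I HI).
  - intros [J [HJ HJnp]].
    apply sig_eq_ext, (lift_label_image prec Q Htrans Happrox Hmono J HJ HJnp).
Qed.
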